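(* Let $m\ge1$ and let $N_m$ be the semiring of polynomials in $X_1,\ldots,X_m$ with nonnegative integer coefficients. Let $P\in N_m$ be a sum of $n$ monomials (possibly repeated, each with coefficient $1$), where $n$ is prime. Then $P$ has unique factorisation inside $N_m$, i.e. any two factorisations of $P$ into irreducible elements of $N_m$ coincide up to the order of the factors.
   Context: An element $Q\in N_m$ with $Q\neq 0,1$ is irreducible in $N_m$ if whenever $Q=ST$ with $S,T\in N_m$, one of $S,T$ equals $1$. The number of monomials of $P$ (counted with repetition) equals $P(1,\ldots,1)$. *)

From HB Require Import structures.
From mathcomp Require Import all_boot all_order all_algebra.
From mathcomp Require Import mpoly.
Set Implicit Arguments. Unset Strict Implicit. Unset Printing Implicit Defensive.
Import Order.TTheory GRing.Theory Num.Theory.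
Local Open Scope ring_scope.

(* N_m : polynomials in X_1..X_m with nonnegative integer coefficients,
   realised as the sub-semiring of {mpoly int[m]} of polynomials whose
   coefficients are all >= 0. *)
Definition inNm (m : nat) (p : {mpoly int[m]}) : Prop :=
  forall k : 'X_{1..m}, 0 <= p@_k.

Definition irreducibleNm (m : nat) (Q : {mpoly int[m]}) : Prop :=
  [/\ inNm Q, Q <> 0, Q <> 1 &
      forall S T : {mpoly int[m]}, inNm S -> inNm T -> Q = S * T ->
        S = 1 \/ T = 1].

(* Evaluating at X_1 = ... = X_m = 1 counts monomials and is multiplicative, so
   in a factorisation of P into irreducibles of N_m the weights of the factors
   multiply to the prime n.  Hence all factors but one have weight 1, i.e. are
   monomials, and irreducible monomials are single variables: every
   factorisation reads P = Q * X^a with Q irreducible of weight n.  Such a Q is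
   not divisible by any variable X_i, so some monomial of Q avoids X_i; in
   Q * X^a = Q' * X^b this forces a_i <= b_i, and symmetrically b_i <= a_i.
   Thus a = b, Q = Q', and the variable factors agree as multisets. *)

From HB Require Import structures.
From mathcomp Require Import all_boot all_order all_algebra.
From mathcomp Require Import mpoly.
From mathcomp Require Import zify.
Set Implicit Arguments. Unset Strict Implicit. Unset Printing Implicit Defensive.
Import Order.TTheory GRing.Theory Num.Theory.
Local Open Scope ring_scope.

Lemma int_prime_mul_ge1 (a b : int) (p : nat) : prime p ->
  1 <= a -> 1 <= b -> a != 1 -> a * b = p%:Z -> b = 1.
Proof.
case: a b => [a|//] [b|//] /primeP[p_gt1 dvd_p] _ _ a_ne1 /eqP.
rewrite -PoszM eqz_nat => /eqP ab_p.
have b_dvd_p : (b %| p)%N by rewrite -ab_p dvdn_mull.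
have /orP[/eqP -> //|/eqP b_p] := dvd_p b b_dvd_p.
by move: a_ne1 ab_p; rewrite b_p; nia.
Qed.

Lemma perm_count_mem (T : eqType) (s t : seq T) :
  (forall x, count_mem x s = count_mem x t) -> perm_eq s t.
Proof. by move=> cnt; apply/allP => x _; apply/eqP/cnt. Qed.

Section NonnegativeMPoly.

Variable m : nat.
Implicit Types (p q Q R : {mpoly int[m]}) (k : 'X_{1..m}).

Definition mweight p : int := p.@[fun _ => 1].

Lemma mweightE p : mweight p = \sum_(k <- msupp p) p@_k.
Proof.
rewrite /mweight mevalE; apply: eq_bigr => k _.
by rewrite big1 ?mulr1 // => i _; rewrite expr1n.
Qed.

Lemma mweightM p q : mweight (p * q) = mweight p * mweight q.
Proof. exact: mevalM. Qed.

Lemma mweight1 : mweight 1 = 1.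
Proof. exact: meval1. Qed.

Lemma mweightX k : mweight 'X_[k] = 1.
Proof. by rewrite /mweight mevalX big1 // => i _; rewrite expr1n. Qed.

Lemma mweight_sumX (s : seq 'X_{1..m}) :
  mweight (\sum_(mu <- s) 'X_[mu]) = (size s)%:Z.
Proof.
elim: s => [|mu s IH]; first by rewrite big_nil /mweight meval0.
by rewrite big_cons [mweight _]mevalD -!/(mweight _) IH mweightX intS.
Qed.

Lemma inNmX k : inNm ('X_[k] : {mpoly int[m]}).
Proof. by move=> j; rewrite mcoeffX; case: (_ == _). Qed.

Lemma inNm_mcoeff_ge1 p k : inNm p -> k \in msupp p -> 1 <= p@_k.
Proof.
by move=> p_ge0; rewrite mcoeff_msupp; have := p_ge0 k; case: (p@_k) => [[]|].
Qed.

Lemma mweight_ge1 p : inNm p -> p != 0 -> 1 <= mweight p.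
Proof.
move=> p_ge0; rewrite -msupp_eq0 mweightE.
case E: (msupp p) => [//|k r] _; rewrite big_cons -[1]addr0 lerD //.
  by apply: inNm_mcoeff_ge1; rewrite // E mem_head.
by apply: sumr_ge0 => j _; apply: p_ge0.
Qed.

Lemma mweight_eq1_monomial p : inNm p -> mweight p = 1 -> exists k, p = 'X_[k].
Proof.
move=> p_ge0; rewrite mweightE.
have cf_ge1 k : k \in msupp p -> 1 <= p@_k by apply: inNm_mcoeff_ge1.
have sum_ge0 (r : seq 'X_{1..m}) : 0 <= \sum_(j <- r) p@_j.
  by apply: sumr_ge0 => j _; apply: p_ge0.
case E: (msupp p) cf_ge1 => [|k [|j r]] cf_ge1; rewrite ?big_nil ?big_cons //.
  rewrite big_nil addr0 => pk1.
  by exists k; rewrite [LHS]mpolyE E big_seq1 pk1 scale1r.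
have k_ge1 := cf_ge1 k (mem_head _ _).
have j_ge1 : 1 <= p@_j by apply: cf_ge1; rewrite !inE eqxx orbT.
by have := lerD k_ge1 (lerD j_ge1 (sum_ge0 r)) => /[swap] ->.
Qed.

Lemma mpolyX_eq1 k : ('X_[k] : {mpoly int[m]}) = 1 -> k = 0%MM.
Proof.
rewrite -mpolyX0 => /(congr1 (mcoeff k)).
by rewrite !mcoeffX eqxx; case: eqP.
Qed.

Lemma mpolyX_split k (i : 'I_m) : (0 < k i)%N -> k = (U_(i) + (k - U_(i)))%MM.
Proof.
move=> k_i; apply/mnmP => j; rewrite mnmDE mnmBE mnm1E.
by case: eqP => [<-|_]; [rewrite subnKC | rewrite subn0].
Qed.

Lemma irreducibleNm_monomial k : irreducibleNm ('X_[k] : {mpoly int[m]}) ->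
  exists i, k = U_(i)%MM.
Proof.
case=> _ _ X_ne1 X_irr.
have [i /= k_i|k0] := pickP (fun i => (0 < k i)%N); last first.
  exfalso; apply: X_ne1; suff -> : k = 0%MM by rewrite mpolyX0.
  by apply/mnmP => j; rewrite mnm0E; have /= := k0 j; case: (k j).
exists i; have k_split := mpolyX_split k_i.
have := X_irr _ _ (inNmX U_(i)) (inNmX (k - U_(i))).
rewrite -mpolyXD -k_split => /(_ erefl) [/mpolyX_eq1/eqP|/mpolyX_eq1 k'0].
  by rewrite mnm1_eq0.
by rewrite k_split k'0 addm0.
Qed.

Lemma inNm_dvdX Q (i : 'I_m) : inNm Q ->
  (forall k, k \in msupp Q -> (0 < k i)%N) ->
  exists2 R, Q = 'X_[U_(i)] * R & inNm R.
Proof.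
move=> Q_ge0 supp_i.
exists (\sum_(k <- msupp Q) Q@_k *: 'X_[(k - U_(i))%MM]); last first.
  move=> j; rewrite raddf_sum /=; apply: sumr_ge0 => k _.
  by rewrite mcoeffZ mulr_ge0 // inNmX.
rewrite mulr_sumr [LHS]mpolyE big_seq [RHS]big_seq.
apply: eq_bigr => k /supp_i k_i.
by rewrite -scalerAr -mpolyXD -mpolyX_split.
Qed.

Lemma irreducibleNm_msupp_avoid Q (i : 'I_m) :
  irreducibleNm Q -> mweight Q != 1 -> exists2 k, k \in msupp Q & k i = 0%N.
Proof.
move=> Q_irr wQ_ne1.
have [/hasP[k k_in /eqP k_i]|/hasPn supp_i] :=
  boolP (has (fun k : 'X_{1..m} => k i == 0%N) (msupp Q)); first by exists k.
case: Q_irr => Q_ge0 _ _ Q_irr.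
have [|R QE R_ge0] := inNm_dvdX (i := i) Q_ge0.
  by move=> k /supp_i; rewrite lt0n.
have [/mpolyX_eq1/eqP|R1] := Q_irr _ _ (inNmX _) R_ge0 QE.
  by rewrite mnm1_eq0.
by move: wQ_ne1; rewrite QE R1 mulr1 mweightX.
Qed.

Lemma irreducibleNm_mulX_le Q Q' (a b : 'X_{1..m}) :
  irreducibleNm Q' -> mweight Q' != 1 ->
  Q * 'X_[a] = Q' * 'X_[b] -> forall i, (a i <= b i)%N.
Proof.
move=> Q'_irr wQ'_ne1 QQ' i; rewrite leqNgt; apply/negP => b_lt_a.
have [k k_in k_i] := irreducibleNm_msupp_avoid i Q'_irr wQ'_ne1.
have : (b + k)%MM \in msupp (Q' * 'X_[b]).
  by rewrite (perm_mem (msuppMX _ _)); apply: map_f.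
rewrite -QQ' (perm_mem (msuppMX _ _)) => /mapP[k' _ /mnmP/(_ i)].
by rewrite !mnmDE k_i addn0 => b_i; move: b_lt_a; rewrite b_i ltnNge leq_addr.
Qed.

Lemma mpolyX_prodU (ix : seq 'I_m) :
  \prod_(i <- ix) ('X_[U_(i)] : {mpoly int[m]}) = 'X_[s2m ix].
Proof.
rewrite mprodXE; congr 'X_[_]; apply/mnmP => j.
rewrite mnm_sumE mnmE -sum1_count [RHS]big_mkcond /=.
by apply: eq_bigr => i _; rewrite mnm1E; case: eqP.
Qed.

Lemma s2m_perm (ix iy : seq 'I_m) : s2m ix = s2m iy -> perm_eq ix iy.
Proof.
move/mnmP => eq_cnt; apply: perm_count_mem => j.
by have := eq_cnt j; rewrite !mnmE.
Qed.

Lemma irreducibleNm_mweight_ge1 f : irreducibleNm f -> 1 <= mweight f.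
Proof. by case=> f_ge0 f_ne0 _ _; apply: mweight_ge1 => //; apply/eqP. Qed.

Lemma mweight_prod_ge1 (fs : seq {mpoly int[m]}) :
  (forall f, f \in fs -> irreducibleNm f) -> 1 <= mweight (\prod_(f <- fs) f).
Proof.
elim: fs => [_|f fs IH fs_irr]; first by rewrite big_nil mweight1.
rewrite big_cons mweightM -[1]mulr1 ler_pM //.
  exact/irreducibleNm_mweight_ge1/fs_irr/mem_head.
by apply: IH => g g_in; apply: fs_irr; rewrite inE g_in orbT.
Qed.

Lemma irreducibleNm_mweight1_var f : irreducibleNm f -> mweight f = 1 ->
  exists i, f = 'X_[U_(i)].
Proof.
move=> f_irr wf1; have [f_ge0 _ _ _] := f_irr.
have [k fk] := mweight_eq1_monomial f_ge0 wf1.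
by move: f_irr; rewrite fk => /irreducibleNm_monomial[i ->]; exists i.
Qed.

Lemma mweight_prod_eq1_vars (fs : seq {mpoly int[m]}) :
  (forall f, f \in fs -> irreducibleNm f) -> mweight (\prod_(f <- fs) f) = 1 ->
  exists ix : seq 'I_m, fs = map (fun i => 'X_[U_(i)]) ix.
Proof.
elim: fs => [|f fs IH] fs_irr; first by exists [::].
have f_irr := fs_irr f (mem_head _ _).
have fs'_irr g : g \in fs -> irreducibleNm g.
  by move=> g_in; apply: fs_irr; rewrite inE g_in orbT.
have wf_ge1 := irreducibleNm_mweight_ge1 f_irr.
have wfs_ge1 := mweight_prod_ge1 fs'_irr.
rewrite big_cons mweightM => w1.
have [wf1 wfs1] : mweight f = 1 /\ mweight (\prod_(g <- fs) g) = 1 by nia.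
have [ix ->] := IH fs'_irr wfs1.
by have [i ->] := irreducibleNm_mweight1_var f_irr wf1; exists (i :: ix).
Qed.

Lemma factorisation_prime_mweight (fs : seq {mpoly int[m]}) (p : nat) :
  (forall f, f \in fs -> irreducibleNm f) -> prime p ->
  mweight (\prod_(f <- fs) f) = p%:Z ->
  exists Q (ix : seq 'I_m), [/\ irreducibleNm Q, mweight Q != 1 &
     perm_eq fs (Q :: map (fun i => 'X_[U_(i)]) ix)].
Proof.
elim: fs => [|f fs IH] fs_irr p_pr.
  by rewrite big_nil mweight1 => -[p1]; rewrite -p1 in p_pr.
have f_irr := fs_irr f (mem_head _ _).
have fs'_irr g : g \in fs -> irreducibleNm g.
  by move=> g_in; apply: fs_irr; rewrite inE g_in orbT.
rewrite big_cons mweightM => wp.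
have [wf1|wf_ne1] := eqVneq (mweight f) 1.
  have [i ->] := irreducibleNm_mweight1_var f_irr wf1.
  rewrite wf1 mul1r in wp.
  have [Q [ix [Q_irr wQ_ne1 fs_perm]]] := IH fs'_irr p_pr wp.
  exists Q, (i :: ix); split => //=.
  rewrite -(perm_cons 'X_[U_(i)]) in fs_perm.
  by apply: (perm_trans fs_perm); rewrite (perm_catCA [:: 'X_[U_(i)]] [:: Q]).
have wf_ge1 := irreducibleNm_mweight_ge1 f_irr.
have wfs1 := int_prime_mul_ge1 p_pr wf_ge1 (mweight_prod_ge1 fs'_irr) wf_ne1 wp.
have [ix ->] := mweight_prod_eq1_vars fs'_irr wfs1.
by exists f, ix.
Qed.

Lemma prod_perm_varsE (fs : seq {mpoly int[m]}) Q (ix : seq 'I_m) :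
  perm_eq fs (Q :: map (fun i => 'X_[U_(i)]) ix) ->
  \prod_(f <- fs) f = Q * 'X_[s2m ix].
Proof.
by move=> fs_perm; rewrite (perm_big _ fs_perm) big_cons big_map mpolyX_prodU.
Qed.

End NonnegativeMPoly.

Theorem mainTheorem4 (m : nat) (hm : (0 < m)%N) (n : nat) (hn : prime n)
  (s : seq 'X_{1..m}) (hs : size s = n)
  (fs gs : seq {mpoly int[m]}) :
  (forall f, f \in fs -> irreducibleNm f) ->
  (forall g, g \in gs -> irreducibleNm g) ->
  \prod_(f <- fs) f = \sum_(mu <- s) 'X_[mu] ->
  \prod_(g <- gs) g = \sum_(mu <- s) 'X_[mu] ->
  perm_eq fs gs.
Proof.
move=> fs_irr gs_irr fsP gsP.
have wP : mweight (\sum_(mu <- s) ('X_[mu] : {mpoly int[m]})) = n%:Z.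
  by rewrite mweight_sumX hs.
have [Q [ix [Q_irr wQ fs_perm]]] :=
  factorisation_prime_mweight fs_irr hn (etrans (congr1 _ fsP) wP).
have [Q' [iy [Q'_irr wQ' gs_perm]]] :=
  factorisation_prime_mweight gs_irr hn (etrans (congr1 _ gsP) wP).
have QQ' : Q * 'X_[s2m ix] = Q' * 'X_[s2m iy].
  by rewrite -(prod_perm_varsE fs_perm) -(prod_perm_varsE gs_perm) fsP gsP.
have ixy : s2m ix = s2m iy.
  apply/mnmP => j; apply/eqP; rewrite eqn_leq.
  rewrite (irreducibleNm_mulX_le Q'_irr wQ' QQ').
  by rewrite (irreducibleNm_mulX_le Q_irr wQ (esym QQ')).
have QE : Q = Q'.
  by apply/mpolyP => k; rewrite -(mcoeffMX Q (s2m ix)) QQ' ixy mcoeffMX.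
apply: (perm_trans fs_perm); rewrite perm_sym (perm_trans gs_perm) //.
by rewrite QE perm_cons perm_map // perm_sym s2m_perm.
Qed.
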